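(* Let $\alpha=\frac{r}{s}+k\sqrt{p/q}$ be a positive irrational, where $r\in\mathbb Z$, $p,q,s\in\mathbb N$, $k\in\{-1,1\}$, $s$ odd, $\gcd(r,s)=1$, $\gcd(p,q)=1$. Let $d_1=\gcd(ps^2-qr^2,qs)$ and $N=\frac{pqs^4}{d_1^2}$ (a positive nonsquare integer). (1) If $x^2-Ny^2=-1$ has no integer solution, then for $A\in GL(2,\mathbb Z)$, $\pi(A)$ restricts to an isometric automorphism of $\mathcal A_\alpha$ if and only if $$A=\begin{bmatrix} -\frac{qrs}{d_1}y_1+x_1 & \frac{qs^2}{d_1}y_1\\ \frac{ps^2-qr^2}{d_1}y_1 & \frac{qrs}{d_1}y_1+x_1\end{bmatrix}^n$$ for some $n\in\mathbb Z$, where $(x_1,y_1)$ is the fundamental solution of $x^2-Ny^2=1$. (2) If $x^2-Ny^2=-1$ has an integer solution, then $\pi(A)$ restricts to an isometric automorphism of $\mathcal A_\alpha$ if and only if $$A=\begin{bmatrix} -\frac{qrs}{d_1}ky_1'+x_1' & \frac{qs^2}{d_1}ky_1'\\ \frac{ps^2-qr^2}{d_1}ky_1' & \frac{qrs}{d_1}ky_1'+x_1'\end{bmatrix}^n$$ for some $n\in\mathbb Z$, where $(x_1',y_1')$ is the fundamental solution of $x^2-Ny^2=-1$.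
   Context: For a positive irrational $\alpha$, $\mathcal A_\alpha=\{f\in C(\mathbb T^2): \hat f(m,n)=0 \text{ whenever } m+\alpha n<0\}$ ($\mathbb T$ the unit circle, $\hat f$ the Fourier transform on $\mathbb Z^2$), a uniform algebra with the sup norm. For $A=\begin{bmatrix} a&b\\ c&d\end{bmatrix}\in GL(2,\mathbb Z)$, $\pi(A)(f)=f\circ\varphi$ with $\varphi(z,w)=(z^aw^b,z^cw^d)$. For a positive nonsquare integer $N$ and $e\in\{1,-1\}$, the fundamental solution of $x^2-Ny^2=e$ (when a solution exists) is the solution $(x_1,y_1)$ in positive integers with $x_1$ smallest. *)

From Stdlib Require Export Reals ZArith.
Open Scope R_scope.

(** * Functions on the torus T^2
    We identify T^2 with R^2 / (2πZ)^2 via (s,t) |-> (e^{is}, e^{it}).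
    A complex number is a pair (real part, imaginary part). *)
Definition CT2fun := R -> R -> (R * R).

Definition periodic2 (f : CT2fun) : Prop :=
  forall s t, f (s + 2 * PI) t = f s t /\ f s (t + 2 * PI) = f s t.

Definition continuous2 (f : CT2fun) : Prop :=
  forall s t eps, 0 < eps -> exists delta, 0 < delta /\
    forall s' t', Rabs (s' - s) < delta -> Rabs (t' - t) < delta ->
      Rabs (fst (f s' t') - fst (f s t)) < eps /\
      Rabs (snd (f s' t') - snd (f s t)) < eps.

Definition in_CT2 (f : CT2fun) : Prop := continuous2 f /\ periodic2 f.

(** Fourier transform on Z^2, for continuous f:
    hat f(m,n) = (1/4π^2) ∫_0^{2π}∫_0^{2π} f(s,t) e^{-i(ms+nt)} ds dt,
    written as the limit of the (uniform-grid) Riemann sums of this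
    Riemann integral, with K+1 grid points in each direction. *)
Definition grid (K j : nat) : R := 2 * PI * INR j / INR (S K).

Definition rsum_re (f : CT2fun) (m n : Z) (K : nat) : R :=
  / (INR (S K) * INR (S K)) *
  sum_f_R0 (fun j => sum_f_R0 (fun l =>
     let u := IZR m * grid K j + IZR n * grid K l in
     fst (f (grid K j) (grid K l)) * cos u + snd (f (grid K j) (grid K l)) * sin u) K) K.

Definition rsum_im (f : CT2fun) (m n : Z) (K : nat) : R :=
  / (INR (S K) * INR (S K)) *
  sum_f_R0 (fun j => sum_f_R0 (fun l =>
     let u := IZR m * grid K j + IZR n * grid K l in
     snd (f (grid K j) (grid K l)) * cos u - fst (f (grid K j) (grid K l)) * sin u) K) K.

Definition fourier_coef (f : CT2fun) (m n : Z) (c : R * R) : Prop :=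
  Un_cv (rsum_re f m n) (fst c) /\ Un_cv (rsum_im f m n) (snd c).

Definition in_A (alpha : R) (f : CT2fun) : Prop :=
  in_CT2 f /\
  forall m n : Z, IZR m + alpha * IZR n < 0 -> fourier_coef f m n (0, 0).

Record M2 := mkM2 { e11 : Z; e12 : Z; e21 : Z; e22 : Z }.

Definition detM (A : M2) : Z := (e11 A * e22 A - e12 A * e21 A)%Z.

Definition inGL2Z (A : M2) : Prop := detM A = 1%Z \/ detM A = (-1)%Z.

Definition mulM (A B : M2) : M2 :=
  mkM2 (e11 A * e11 B + e12 A * e21 B)%Z (e11 A * e12 B + e12 A * e22 B)%Z
       (e21 A * e11 B + e22 A * e21 B)%Z (e21 A * e12 B + e22 A * e22 B)%Z.

Definition idM : M2 := mkM2 1 0 0 1.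

(** inverse in GL(2,Z) (correct when det A = ±1) *)
Definition invM (A : M2) : M2 :=
  let d := detM A in
  mkM2 (d * e22 A)%Z (- d * e12 A)%Z (- d * e21 A)%Z (d * e11 A)%Z.

Fixpoint powM_nat (A : M2) (k : nat) : M2 :=
  match k with O => idM | S k' => mulM A (powM_nat A k') end.

Definition powM (A : M2) (n : Z) : M2 :=
  if (0 <=? n)%Z then powM_nat A (Z.to_nat n) else powM_nat (invM A) (Z.to_nat (- n)).

(** pi(A) f = f ∘ φ, φ(z,w) = (z^a w^b, z^c w^d); in the coordinates
    z = e^{is}, w = e^{it}: φ(s,t) = (a s + b t, c s + d t). *)
Definition piA (A : M2) (f : CT2fun) : CT2fun :=
  fun s t => f (IZR (e11 A) * s + IZR (e12 A) * t) (IZR (e21 A) * s + IZR (e22 A) * t).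

Definition supnorm_le (f g : CT2fun) : Prop :=
  forall M, (forall s t, sqrt (fst (g s t) ^ 2 + snd (g s t) ^ 2) <= M) ->
            (forall s t, sqrt (fst (f s t) ^ 2 + snd (f s t) ^ 2) <= M).

Definition isom_aut_A (alpha : R) (A : M2) : Prop :=
  (forall f, in_A alpha f -> in_A alpha (piA A f)) /\
  (forall g, in_A alpha g -> exists f, in_A alpha f /\ forall s t, piA A f s t = g s t) /\
  (forall f, in_A alpha f -> supnorm_le f (piA A f) /\ supnorm_le (piA A f) f).

Definition pell_solvable (N e : Z) : Prop :=
  exists x y : Z, (x * x - N * y * y)%Z = e.

Definition fundamental_solution (N e x1 y1 : Z) : Prop :=
  (0 < x1)%Z /\ (0 < y1)%Z /\ (x1 * x1 - N * y1 * y1)%Z = e /\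
  forall x y : Z, (0 < x)%Z -> (0 < y)%Z -> (x * x - N * y * y)%Z = e -> (x1 <= x)%Z.

Definition alpha_of (r p q s k : Z) : R :=
  IZR r / IZR s + IZR k * sqrt (IZR p / IZR q).

Definition irrational (x : R) : Prop :=
  ~ exists a b : Z, b <> 0%Z /\ x = IZR a / IZR b.

Definition d1_of (r p q s : Z) : Z := Z.gcd (p * s * s - q * r * r) (q * s).

Definition N_of (r p q s : Z) : Z :=
  (p * q * s ^ 4 / (d1_of r p q s * d1_of r p q s))%Z.

(** The generating matrix with parameter kk (kk = 1 in case (1), kk = k in case (2)) *)
Definition genM (r p q s kk x y : Z) : M2 :=
  let d := d1_of r p q s in
  mkM2 (- (q * r * s / d) * kk * y + x)%Z ((q * s * s / d) * kk * y)%Z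
       (((p * s * s - q * r * r) / d) * kk * y)%Z ((q * r * s / d) * kk * y + x)%Z.

(* [piA A] preserves A_alpha exactly when the dual action of A on frequencies,
   (m, n) |-> A^T (m, n), preserves the half-plane m + alpha n >= 0.  Testing on the
   characters e^{i(ms + nt)} gives one direction.  For the other, the Riemann sums
   defining the Fourier coefficients run over the (K+1)-torsion points of T^2, which
   A permutes, so the coefficients of [piA A f] are those of f at the transformed
   frequencies.  For irrational alpha the condition says that (1, alpha) is an
   eigenvector of A with an eigenvalue lambda > 0.  As alpha is a root of
   e s X^2 - 2 e r X - f (with d1 e = q s, d1 f = p s^2 - q r^2), these matrices are
   exactly the matrices of the units X + Y sqrt N of norm +-1, with
   lambda = X + k Y sqrt N.  Since lambda is an injective homomorphism into the
   positive reals and the fundamental Pell solution gives its least value above 1,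
   the stabilizer is infinite cyclic, generated by the unit of norm -1 when one
   exists and by the unit of norm 1 otherwise. *)

From Stdlib Require Import Reals ZArith Lia Lra Psatz Znumtheory FunctionalExtensionality.
From HB Require structures.
From mathcomp Require ssreflect ssrfun ssrbool ssrnat eqtype fintype bigop.
Open Scope R_scope.

(** * The stabilizer of the ray through (1, alpha) *)

Definition eigval (al : R) (A : M2) : R := IZR (e11 A) + al * IZR (e12 A).

Definition has_eigvec (al : R) (A : M2) : Prop :=
  IZR (e21 A) + al * IZR (e22 A) = al * eigval al A.

Definition stab_ray (al : R) (A : M2) : Prop :=
  inGL2Z A /\ has_eigvec al A /\ 0 < eigval al A.

Lemma irrational_lin_indep al (X Y : Z) :
  irrational al -> IZR X + al * IZR Y = 0 -> X = 0%Z /\ Y = 0%Z.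
Proof.
  intros Hirr H. destruct (Z.eq_dec Y 0) as [->|HY].
  - split; [apply eq_IZR; lra | reflexivity].
  - exfalso. apply Hirr. exists (- X)%Z, Y. split; [exact HY|].
    apply not_0_IZR in HY. rewrite opp_IZR. field_simplify_eq; [lra | exact HY].
Qed.

Lemma detM_mulM A B : detM (mulM A B) = (detM A * detM B)%Z.
Proof. destruct A, B; unfold detM, mulM; simpl; ring. Qed.

Lemma detM_invM A : inGL2Z A -> detM (invM A) = detM A.
Proof. destruct A; unfold inGL2Z, invM, detM; simpl; intros [H|H]; rewrite H; nia. Qed.

Lemma inGL2Z_mulM A B : inGL2Z A -> inGL2Z B -> inGL2Z (mulM A B).
Proof. unfold inGL2Z; rewrite detM_mulM; intros [->| ->] [->| ->]; auto. Qed.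

Lemma inGL2Z_invM A : inGL2Z A -> inGL2Z (invM A).
Proof. intros HA; unfold inGL2Z; rewrite detM_invM; exact HA. Qed.

Lemma mulM_invM_l A : inGL2Z A -> mulM (invM A) A = idM.
Proof.
  destruct A; unfold inGL2Z, invM, mulM, idM, detM; simpl.
  intros [H|H]; rewrite H; f_equal; lia.
Qed.

Lemma mulM_invM_r A : inGL2Z A -> mulM A (invM A) = idM.
Proof.
  destruct A; unfold inGL2Z, invM, mulM, idM, detM; simpl.
  intros [H|H]; rewrite H; f_equal; lia.
Qed.

Lemma has_eigvec_mulM al A B :
  has_eigvec al A -> has_eigvec al B -> has_eigvec al (mulM A B).
Proof.
  destruct A as [a b c d], B as [a' b' c' d']; unfold has_eigvec, eigval, mulM; simpl.
  intros HA HB. rewrite !plus_IZR, !mult_IZR.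
  replace (IZR c) with (al * (IZR a + al * IZR b) - al * IZR d) by lra.
  replace (IZR c') with (al * (IZR a' + al * IZR b') - al * IZR d') by lra.
  ring.
Qed.

Lemma eigval_mulM al A B :
  has_eigvec al B -> eigval al (mulM A B) = eigval al A * eigval al B.
Proof.
  destruct A as [a b c d], B as [a' b' c' d']; unfold has_eigvec, eigval, mulM; simpl.
  intros HB. rewrite !plus_IZR, !mult_IZR.
  replace (IZR c') with (al * (IZR a' + al * IZR b') - al * IZR d') by lra.
  ring.
Qed.

(* [detM A = eigval al A * (e22 A - al * e12 A)] and [detM A] is a unit. *)
Lemma eigval_invM al A :
  inGL2Z A -> has_eigvec al A -> eigval al (invM A) * eigval al A = 1.
Proof.
  destruct A as [a b c d]; unfold inGL2Z, has_eigvec, eigval, invM, detM; simpl.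
  intros Hdet HA. rewrite !mult_IZR, opp_IZR, minus_IZR, !mult_IZR.
  replace (IZR c) with (al * (IZR a + al * IZR b) - al * IZR d) by lra.
  destruct Hdet as [Hdet|Hdet];
    apply (f_equal IZR) in Hdet; rewrite minus_IZR, !mult_IZR in Hdet;
    replace (IZR c) with (al * (IZR a + al * IZR b) - al * IZR d) in Hdet by lra;
    nra.
Qed.

Lemma stab_ray_idM al : stab_ray al idM.
Proof. unfold stab_ray, has_eigvec, eigval, inGL2Z, detM; simpl; repeat split; auto; lra. Qed.

Lemma eigval_idM al : eigval al idM = 1.
Proof. unfold eigval; simpl; lra. Qed.

Lemma stab_ray_mulM al A B : stab_ray al A -> stab_ray al B -> stab_ray al (mulM A B).
Proof.
  intros (HA & EA & PA) (HB & EB & PB).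
  split; [apply inGL2Z_mulM; assumption|].
  split; [apply has_eigvec_mulM; assumption|].
  rewrite eigval_mulM by exact EB. apply Rmult_lt_0_compat; assumption.
Qed.

Lemma has_eigvec_invM al A : has_eigvec al A -> has_eigvec al (invM A).
Proof.
  destruct A as [a b c d]; unfold has_eigvec, eigval, invM, detM; simpl. intros EA.
  rewrite !mult_IZR, !opp_IZR, minus_IZR, !mult_IZR.
  replace (IZR c) with (al * (IZR a + al * IZR b) - al * IZR d) by lra.
  ring.
Qed.

Lemma stab_ray_invM al A : stab_ray al A -> stab_ray al (invM A).
Proof.
  intros (HA & EA & PA).
  split; [apply inGL2Z_invM; exact HA|].
  split; [apply has_eigvec_invM; assumption|].
  pose proof (eigval_invM al A HA EA). nra.
Qed.

Lemma stab_ray_powM_nat al G n :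
  stab_ray al G -> stab_ray al (powM_nat G n) /\ eigval al (powM_nat G n) = eigval al G ^ n.
Proof.
  intros HG. induction n as [|n [Hn En]]; simpl.
  - split; [apply stab_ray_idM | apply eigval_idM].
  - split; [apply stab_ray_mulM; assumption|].
    rewrite eigval_mulM, En by apply Hn. reflexivity.
Qed.

Lemma stab_ray_powM al G n :
  stab_ray al G -> stab_ray al (powM G n) /\ eigval al (powM G n) = powerRZ (eigval al G) n.
Proof.
  intros HG. unfold powM. destruct n as [|n|n]; simpl.
  - split; [apply stab_ray_idM | apply eigval_idM].
  - apply stab_ray_powM_nat; exact HG.
  - destruct (stab_ray_powM_nat al (invM G) (Pos.to_nat n) (stab_ray_invM al G HG)) as [Hn En].
    split; [exact Hn|]. rewrite En, <- pow_inv. f_equal.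
    destruct HG as (HA & EA & PA). pose proof (eigval_invM al G HA EA).
    field_simplify_eq; lra.
Qed.

Lemma has_eigvec_eigval_inj al A B : irrational al ->
  has_eigvec al A -> has_eigvec al B -> eigval al A = eigval al B -> A = B.
Proof.
  destruct A as [a b c d], B as [a' b' c' d']; unfold has_eigvec, eigval; simpl.
  intros Hirr EA EB E.
  destruct (irrational_lin_indep al (a - a') (b - b') Hirr) as [Ha Hb].
  { rewrite !minus_IZR. lra. }
  destruct (irrational_lin_indep al (c - c') (d - d') Hirr) as [Hc Hd].
  { rewrite !minus_IZR. rewrite E in EA. lra. }
  f_equal; lia.
Qed.

Lemma powerRZ_floor mu x : 1 < mu -> 0 < x ->
  exists n : Z, powerRZ mu n <= x < powerRZ mu (n + 1).
Proof.
  intros Hmu Hx.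
  assert (Hl : 0 < ln mu) by (rewrite <- ln_1; apply ln_increasing; lra).
  set (t := ln x / ln mu).
  destruct (archimed t) as [Hup1 Hup2].
  exists (up t - 1)%Z.
  rewrite !powerRZ_Rpower by lra. unfold Rpower.
  replace (up t - 1 + 1)%Z with (up t) by ring.
  rewrite minus_IZR, <- (exp_ln x) by lra.
  replace (ln x) with (t * ln mu) by (unfold t; field; lra).
  assert (Hmono : forall u v, u <= v -> exp u <= exp v).
  { intros u v [Huv| ->]; [left; apply exp_increasing; exact Huv | right; reflexivity]. }
  split.
  - apply Hmono, Rmult_le_compat_r; lra.
  - apply exp_increasing, Rmult_lt_compat_r; lra.
Qed.

Lemma eigval_mulM_invM al A B :
  stab_ray al B -> eigval al (mulM A (invM B)) = eigval al A / eigval al B.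
Proof.
  intros (HB & EB & PB).
  rewrite eigval_mulM by (apply has_eigvec_invM; assumption).
  pose proof (eigval_invM al B HB EB) as Hinv.
  replace (eigval al (invM B)) with (/ eigval al B); [reflexivity|].
  apply Rmult_eq_reg_r with (eigval al B); [rewrite Rinv_l|]; lra.
Qed.

(* [eigval] is an injective homomorphism from the stabilizer into the positive
   reals; the hypothesis on (1, mu) makes its image discrete. *)
Lemma stab_ray_cyclic al G mu : irrational al -> stab_ray al G -> 1 < mu ->
  (eigval al G = mu \/ eigval al G = / mu) ->
  (forall A, stab_ray al A -> ~ (1 < eigval al A < mu)) ->
  forall A, stab_ray al A -> exists n, A = powM G n.
Proof.
  intros Hirr HG Hmu HGmu Hgap A HA.
  destruct (powerRZ_floor mu (eigval al A) Hmu (proj2 (proj2 HA))) as [n [Hlo Hhi]].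
  assert (Hpow : exists m, eigval al (powM G m) = powerRZ mu n).
  { destruct HGmu as [E|E]; [exists n | exists (- n)%Z];
      rewrite (proj2 (stab_ray_powM al G _ HG)), E.
    - reflexivity.
    - rewrite powerRZ_inv', powerRZ_neg', Rinv_inv. reflexivity. }
  destruct Hpow as [m Hm]. exists m.
  pose proof (stab_ray_powM al G m HG) as [Hsm _].
  assert (Hpos : 0 < powerRZ mu n) by (apply powerRZ_lt; lra).
  rewrite powerRZ_add, powerRZ_1 in Hhi by lra.
  assert (Hquot : eigval al (mulM A (invM (powM G m))) = 1).
  { rewrite eigval_mulM_invM, Hm by exact Hsm.
    assert (Hge : 1 <= eigval al A / powerRZ mu n).
    { apply Rmult_le_reg_r with (powerRZ mu n); [exact Hpos|]. field_simplify; lra. }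
    destruct (Rle_lt_or_eq _ _ Hge) as [Hlt|Heq]; [exfalso|auto].
    apply (Hgap _ (stab_ray_mulM al _ _ HA (stab_ray_invM al _ Hsm))).
    rewrite eigval_mulM_invM, Hm by exact Hsm. split; [exact Hlt|].
    apply Rmult_lt_reg_r with (powerRZ mu n); [exact Hpos|]. field_simplify; lra. }
  apply (has_eigvec_eigval_inj al _ _ Hirr (proj1 (proj2 HA)) (proj1 (proj2 Hsm))).
  rewrite eigval_mulM_invM, Hm in Hquot by exact Hsm.
  rewrite Hm. field_simplify_eq in Hquot; lra.
Qed.

(** * Units of a real quadratic order *)

Lemma fundamental_solution_minimal N t ep x1 y1 X Y : 0 < t -> t * t = IZR N ->
  (ep = 1 \/ ep = -1)%Z -> fundamental_solution N ep x1 y1 ->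
  (X * X - N * Y * Y = ep)%Z -> ~ (1 < IZR X + IZR Y * t < IZR x1 + IZR y1 * t).
Proof.
  intros Ht HtN Hep (Hx1 & Hy1 & Hsol1 & Hmin) HXY [Hv1 Hv2].
  set (v := IZR X + IZR Y * t) in *.
  set (w := IZR X - IZR Y * t).
  assert (Hvw : v * w = IZR ep).
  { apply (f_equal IZR) in HXY. rewrite minus_IZR, !mult_IZR, <- HtN in HXY.
    unfold v, w. rewrite <- HXY. ring. }
  assert (Hw : -1 < w < 1).
  { clearbody v w. clear - Hvw Hv1 Hep. destruct Hep as [->| ->]; simpl in Hvw; split; nra. }
  assert (HX : (0 < X)%Z) by (apply lt_IZR; unfold v, w in *; lra).
  assert (HY : (0 < Y)%Z).
  { apply lt_IZR. assert (0 < IZR Y * t) by (unfold v, w in *; lra).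
    apply (Rmult_lt_reg_r t); lra. }
  assert (HN : (0 < N)%Z) by (apply lt_IZR; rewrite <- HtN; apply Rmult_lt_0_compat; exact Ht).
  pose proof (Hmin X Y HX HY HXY) as Hx1X.
  assert (Hy1Y : (y1 <= Y)%Z).
  { assert (N * (y1 * y1) <= N * (Y * Y))%Z by nia.
    assert (y1 * y1 <= Y * Y)%Z by (apply Z.mul_le_mono_pos_l with N; lia).
    nia. }
  apply IZR_le in Hx1X. apply IZR_le in Hy1Y. unfold v in Hv2. nra.
Qed.

Definition pellN (r s e f : Z) : Z := (e * e * r * r + e * s * f)%Z.

Definition pellM (r s e f X Y : Z) : M2 :=
  mkM2 (X - e * r * Y) (e * s * Y) (f * Y) (X + e * r * Y).

Lemma detM_pellM r s e f X Y : detM (pellM r s e f X Y) = (X * X - pellN r s e f * Y * Y)%Z.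
Proof. unfold detM, pellM, pellN; simpl; ring. Qed.

Section QuadraticIrrational.

Variables (r s e f k : Z) (al t : R).
Hypotheses (hirr : irrational al) (he : (0 < e)%Z)
  (hs2r : Z.gcd s (2 * r) = 1%Z) (hef : Z.gcd e f = 1%Z)
  (hquad : IZR e * IZR s * al * al - 2 * IZR e * IZR r * al - IZR f = 0)
  (hk : k = 1%Z \/ k = (-1)%Z) (ht : 0 < t)
  (hkt : IZR e * (IZR s * al - IZR r) = IZR k * t).

Let N := pellN r s e f.

Lemma pellN_sqrt : t * t = IZR N.
Proof.
  assert (Hk2 : IZR k * IZR k = 1) by (destruct hk as [-> | ->]; simpl; lra).
  transitivity ((IZR k * t) * (IZR k * t)); [rewrite <- (Rmult_1_l (t * t)), <- Hk2; ring|].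
  rewrite <- hkt. unfold N, pellN. rewrite plus_IZR, !mult_IZR.
  replace (IZR f) with (IZR e * IZR s * al * al - 2 * IZR e * IZR r * al) by lra.
  ring.
Qed.

Lemma eigval_pellM X Y : eigval al (pellM r s e f X Y) = IZR X + IZR (k * Y) * t.
Proof.
  unfold eigval, pellM; simpl. rewrite minus_IZR, !mult_IZR.
  replace (IZR k * IZR Y * t) with (IZR Y * (IZR k * t)) by ring.
  rewrite <- hkt. ring.
Qed.

Lemma has_eigvec_pellM X Y : has_eigvec al (pellM r s e f X Y).
Proof.
  unfold has_eigvec, eigval, pellM; simpl. rewrite minus_IZR, plus_IZR, !mult_IZR.
  replace (IZR f) with (IZR e * IZR s * al * al - 2 * IZR e * IZR r * al) by lra.
  ring.
Qed.

Lemma stab_ray_pellM X Y : (X * X - N * Y * Y = 1 \/ X * X - N * Y * Y = -1)%Z ->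
  0 < IZR X + IZR (k * Y) * t -> stab_ray al (pellM r s e f X Y).
Proof.
  intros Hdet Hpos. unfold stab_ray, inGL2Z.
  rewrite detM_pellM, eigval_pellM. auto using has_eigvec_pellM.
Qed.

Lemma has_eigvec_pellM_inv A : has_eigvec al A -> exists X Y, A = pellM r s e f X Y.
Proof.
  destruct A as [a b c d]. unfold has_eigvec, eigval; simpl. intros EA.
  destruct (irrational_lin_indep al (e * s * c - b * f) (e * s * (d - a) - 2 * e * r * b) hirr)
    as [Hc Had].
  { rewrite !minus_IZR, !mult_IZR, minus_IZR.
    replace (IZR f) with (IZR e * IZR s * al * al - 2 * IZR e * IZR r * al) by lra.
    replace (IZR c) with (al * (IZR a + al * IZR b) - al * IZR d) by lra.
    ring. }
  assert (Had' : (s * (d - a) = 2 * r * b)%Z) by nia.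
  assert (Hsb : (s | b)%Z).
  { apply Gauss with (2 * r)%Z; [exists (d - a)%Z; lia | apply Zgcd_1_rel_prime; exact hs2r]. }
  destruct Hsb as [b' ->].
  assert (Hs : s <> 0%Z) by (intros ->; rewrite Z.gcd_0_l in hs2r; lia).
  assert (Heb : (e | b')%Z).
  { apply Gauss with f; [exists c; nia | apply Zgcd_1_rel_prime; exact hef]. }
  destruct Heb as [Y ->].
  assert (Hcf : c = (f * Y)%Z) by (apply Z.mul_reg_l with (e * s)%Z; nia).
  assert (Hda : d = (a + 2 * e * r * Y)%Z) by (apply Z.mul_reg_l with s; lia).
  exists (a + e * r * Y)%Z, Y. unfold pellM. f_equal; lia.
Qed.


Lemma stab_ray_eigval_gap A ep x1 y1 : (ep = 1 \/ ep = -1)%Z ->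
  fundamental_solution N ep x1 y1 -> stab_ray al A -> detM A = ep ->
  ~ (1 < eigval al A < IZR x1 + IZR y1 * t).
Proof.
  intros Hep Hfund (_ & EA & _) Hdet.
  destruct (has_eigvec_pellM_inv A EA) as (X & Y & ->).
  rewrite eigval_pellM.
  apply (fundamental_solution_minimal N t ep x1 y1 X (k * Y) ht pellN_sqrt Hep Hfund).
  rewrite detM_pellM in Hdet. fold N in Hdet. destruct hk as [-> | ->]; lia.
Qed.

Lemma stab_ray_iff_powM_pell_plus x1 y1 :
  ~ pell_solvable N (-1) -> fundamental_solution N 1 x1 y1 ->
  forall A, stab_ray al A <-> exists n, A = powM (pellM r s e f x1 y1) n.
Proof.
  intros Hnsol Hfund A.
  pose proof Hfund as (Hx1 & Hy1 & Hsol1 & _).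
  set (mu := IZR x1 + IZR y1 * t).
  assert (Hconj : mu * (IZR x1 - IZR y1 * t) = 1).
  { apply (f_equal IZR) in Hsol1. rewrite minus_IZR, !mult_IZR in Hsol1.
    rewrite <- Hsol1, <- pellN_sqrt. unfold mu. ring. }
  apply IZR_lt in Hx1, Hy1.
  assert (Hmu : 1 < mu) by (unfold mu in *; nra).
  assert (HGmu : eigval al (pellM r s e f x1 y1) = mu \/ eigval al (pellM r s e f x1 y1) = / mu).
  { rewrite eigval_pellM. destruct hk as [-> | ->]; [left | right].
    - unfold mu. rewrite Z.mul_1_l. reflexivity.
    - apply Rmult_eq_reg_l with mu; [|lra]. rewrite Rinv_r, <- Hconj by lra.
      rewrite mult_IZR. simpl. ring. }
  assert (HG : stab_ray al (pellM r s e f x1 y1)).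
  { apply stab_ray_pellM; [left; exact Hsol1|].
    rewrite <- eigval_pellM. destruct HGmu as [-> | ->]; [|apply Rinv_0_lt_compat]; lra. }
  split.
  - apply (stab_ray_cyclic al _ mu hirr HG Hmu HGmu).
    intros B HB. destruct (proj1 HB) as [Hdet|Hdet].
    + exact (stab_ray_eigval_gap B 1 x1 y1 (or_introl eq_refl) Hfund HB Hdet).
    + exfalso. apply Hnsol. destruct (has_eigvec_pellM_inv B (proj1 (proj2 HB))) as (X & Y & ->).
      exists X, Y. rewrite detM_pellM in Hdet. exact Hdet.
  - intros [n ->]. apply stab_ray_powM. exact HG.
Qed.

Lemma stab_ray_iff_powM_pell_minus x1 y1 : fundamental_solution N (-1) x1 y1 ->
  forall A, stab_ray al A <-> exists n, A = powM (pellM r s e f x1 (k * y1)) n.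
Proof.
  intros Hfund A.
  pose proof Hfund as (Hx1 & Hy1 & Hsol1 & _).
  set (G := pellM r s e f x1 (k * y1)).
  set (mu := IZR x1 + IZR y1 * t).
  apply IZR_lt in Hx1, Hy1.
  assert (Hmu : 1 < mu).
  { unfold mu. assert (1 <= IZR x1) by (apply IZR_le; apply lt_IZR in Hx1; lia). nra. }
  assert (HGmu : eigval al G = mu).
  { unfold G, mu. rewrite eigval_pellM.
    replace (k * (k * y1))%Z with y1 by (destruct hk as [-> | ->]; ring). reflexivity. }
  assert (HdetG : detM G = (-1)%Z).
  { unfold G. rewrite detM_pellM. fold N. rewrite <- Hsol1. destruct hk as [-> | ->]; ring. }
  assert (HG : stab_ray al G).
  { split; [right; exact HdetG|]. split; [apply has_eigvec_pellM | lra]. }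
  assert (Hgap := fun B => stab_ray_eigval_gap B (-1) x1 y1 (or_intror eq_refl) Hfund).
  fold mu in Hgap.
  split.
  - apply (stab_ray_cyclic al G mu hirr HG Hmu (or_introl HGmu)).
    intros B HB Hbetween. destruct (proj1 HB) as [HdetB|HdetB]; [|exact (Hgap B HB HdetB Hbetween)].
    (* [G B^-1] then has norm -1 and eigenvalue in (1, mu) *)
    apply (Hgap (mulM G (invM B))).
    + apply stab_ray_mulM; [exact HG | apply stab_ray_invM; exact HB].
    + rewrite detM_mulM, detM_invM, HdetB, HdetG by exact (proj1 HB). reflexivity.
    + pose proof (proj2 (proj2 HB)) as HposB.
      rewrite eigval_mulM_invM, HGmu by exact HB. unfold Rdiv.
      split; apply Rmult_lt_reg_r with (eigval al B); try rewrite Rmult_assoc, Rinv_l by lra; nra.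
  - intros [n ->]. apply stab_ray_powM. exact HG.
Qed.

End QuadraticIrrational.

(** * Fourier coefficients and the action of GL(2, Z) *)

Lemma periodic_Z {T : Type} (g : R -> T) : (forall x, g (x + 2 * PI) = g x) ->
  forall (z : Z) x, g (x + 2 * IZR z * PI) = g x.
Proof.
  intros Hg.
  assert (Hnat : forall n x, g (x + 2 * INR n * PI) = g x).
  { induction n as [|n IH]; intros x.
    - f_equal. simpl. ring.
    - replace (x + 2 * INR (S n) * PI) with ((x + 2 * INR n * PI) + 2 * PI)
        by (rewrite S_INR; ring).
      rewrite Hg. apply IH. }
  intros z x. destruct (Z_le_gt_dec 0 z) as [Hz|Hz].
  - rewrite <- (Z2Nat.id z), <- INR_IZR_INZ by exact Hz. apply Hnat.
  - rewrite <- (Hnat (Z.to_nat (- z)) (x + 2 * IZR z * PI)). f_equal.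
    rewrite INR_IZR_INZ, Z2Nat.id, opp_IZR by lia. ring.
Qed.

Lemma periodic2_Z {T : Type} (G : R -> R -> T) :
  (forall x y, G (x + 2 * PI) y = G x y) -> (forall x y, G x (y + 2 * PI) = G x y) ->
  forall (z1 z2 : Z) x y, G (x + 2 * IZR z1 * PI) (y + 2 * IZR z2 * PI) = G x y.
Proof.
  intros HGx HGy z1 z2 x y.
  rewrite (periodic_Z (fun x' => G x' _) (fun x' => HGx x' _)).
  exact (periodic_Z (G x) (HGy x) z2 y).
Qed.

Lemma cos_Z_period (z : Z) x : cos (x + 2 * IZR z * PI) = cos x.
Proof.
  apply (periodic_Z cos). intros y. rewrite <- (cos_period y 1). f_equal. simpl. ring.
Qed.

Lemma sin_Z_period (z : Z) x : sin (x + 2 * IZR z * PI) = sin x.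
Proof.
  apply (periodic_Z sin). intros y. rewrite <- (sin_period y 1). f_equal. simpl. ring.
Qed.

Lemma cos_lipschitz x y : Rabs (cos x - cos y) <= Rabs (x - y).
Proof.
  destruct (MVT_abs cos (fun c => - sin c) y x (fun c _ => derivable_pt_lim_cos c))
    as (c & E & _).
  rewrite E, Rabs_Ropp.
  assert (Rabs (sin c) <= 1) by apply Rabs_le, SIN_bound.
  pose proof (Rabs_pos (x - y)). nra.
Qed.

Lemma sin_lipschitz x y : Rabs (sin x - sin y) <= Rabs (x - y).
Proof.
  destruct (MVT_abs sin cos y x (fun c _ => derivable_pt_lim_sin c)) as (c & E & _).
  rewrite E.
  assert (Rabs (cos c) <= 1) by apply Rabs_le, COS_bound.
  pose proof (Rabs_pos (x - y)). nra.
Qed.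

Lemma divide_abs_lt (M x : Z) : (M | x)%Z -> (Z.abs x < M)%Z -> x = 0%Z.
Proof. intros [q ->] Hlt. destruct (Z.eq_dec q 0) as [->|Hq]; [ring | nia]. Qed.

Lemma lin_mod_inj (M a b c d u v u' v' : Z) : (0 < M)%Z ->
  (a * d - b * c = 1 \/ a * d - b * c = -1)%Z ->
  (0 <= u < M)%Z -> (0 <= v < M)%Z -> (0 <= u' < M)%Z -> (0 <= v' < M)%Z ->
  ((a * u + b * v) mod M = (a * u' + b * v') mod M)%Z ->
  ((c * u + d * v) mod M = (c * u' + d * v') mod M)%Z ->
  u = u' /\ v = v'.
Proof.
  intros HM Hdet Hu Hv Hu' Hv' E1 E2.
  apply Z.cong_iff_0, Z.mod_divide in E1, E2; try lia.
  set (det := (a * d - b * c)%Z) in Hdet.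
  assert (Hunit : forall x, (M | det * x)%Z -> (M | x)%Z).
  { intros x Hx. replace x with (det * (det * x))%Z by (destruct Hdet as [-> | ->]; ring).
    apply Z.divide_mul_r. exact Hx. }
  split; apply Z.sub_move_0_r, divide_abs_lt with M; try lia; apply Hunit.
  - replace (det * (u - u'))%Z with
      (d * (a * u + b * v - (a * u' + b * v')) - b * (c * u + d * v - (c * u' + d * v')))%Z
      by (unfold det; ring).
    apply Z.divide_sub_r; apply Z.divide_mul_r; assumption.
  - replace (det * (v - v'))%Z with
      (a * (c * u + d * v - (c * u' + d * v')) - c * (a * u + b * v - (a * u' + b * v')))%Z
      by (unfold det; ring).
    apply Z.divide_sub_r; apply Z.divide_mul_r; assumption.
Qed.

Module DoubleSumReindex.
Import HB.structures mathcomp.boot.ssreflect mathcomp.boot.ssrfun mathcomp.boot.ssrbool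
  mathcomp.boot.ssrnat mathcomp.boot.eqtype mathcomp.boot.fintype mathcomp.boot.bigop.

Lemma Rplus_assoc_law : associative Rplus.
Proof. by move=> x y z; rewrite Rplus_assoc. Qed.
HB.instance Definition _ := Monoid.isComLaw.Build R 0 Rplus Rplus_assoc_law Rplus_comm Rplus_0_l.

Lemma sum_f_R0_big (F : nat -> R) K : sum_f_R0 F K = \big[Rplus/0]_(i < K.+1) F i.
Proof.
  elim: K => [|K IH]; first by rewrite big_ord_recr big_ord0 /= Rplus_0_l.
  by rewrite big_ord_recr /= -IH.
Qed.

Lemma sum_f_R0_2_big (T : nat -> nat -> R) K :
  sum_f_R0 (fun j => sum_f_R0 (fun l => T j l) K) K =
  \big[Rplus/0]_(x : 'I_K.+1 * 'I_K.+1) T x.1 x.2.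
Proof. rewrite sum_f_R0_big; under eq_bigr do rewrite sum_f_R0_big; by rewrite pair_big. Qed.

Lemma sum_f_R0_2_reindex K (T : nat -> nat -> R) (h : nat -> nat -> nat * nat) :
  (forall j l, le j K -> le l K -> le (h j l).1 K /\ le (h j l).2 K) ->
  (forall j l j' l', le j K -> le l K -> le j' K -> le l' K ->
     h j l = h j' l' -> j = j' /\ l = l') ->
  sum_f_R0 (fun j => sum_f_R0 (fun l => T (h j l).1 (h j l).2) K) K =
  sum_f_R0 (fun j => sum_f_R0 (fun l => T j l) K) K.
Proof.
  move=> Hrange Hinj; rewrite !sum_f_R0_2_big.
  have Hle (i : 'I_K.+1) : le i K by apply/leP; rewrite -ltnS.
  pose sigma (x : 'I_K.+1 * 'I_K.+1) : 'I_K.+1 * 'I_K.+1 :=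
    (inord (h x.1 x.2).1, inord (h x.1 x.2).2).
  have Hsigma x : nat_of_ord (sigma x).1 = (h x.1 x.2).1 /\ nat_of_ord (sigma x).2 = (h x.1 x.2).2.
    have [H1 H2] := Hrange _ _ (Hle x.1) (Hle x.2).
    by rewrite /= !inordK //; apply/leP; lia.
  have Hsigma_inj : injective sigma.
    move=> [j l] [j' l'] E.
    have [Ej El] := Hsigma (j, l); have [Ej' El'] := Hsigma (j', l').
    rewrite E Ej' El' /= in Ej El.
    have [] := Hinj _ _ _ _ (Hle j) (Hle l) (Hle j') (Hle l')
      (injective_projections _ _ (esym Ej) (esym El)).
    by move=> /ord_inj -> /ord_inj ->.
  rewrite [RHS](reindex_inj Hsigma_inj); apply: eq_bigr => x _.
  by have [-> ->] := Hsigma x.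
Qed.
End DoubleSumReindex.

Lemma sum_f_R0_2_lin_mod K (F : Z -> Z -> R) (a b c d : Z) :
  (a * d - b * c = 1 \/ a * d - b * c = -1)%Z ->
  sum_f_R0 (fun j => sum_f_R0 (fun l =>
    F ((a * Z.of_nat j + b * Z.of_nat l) mod Z.of_nat (S K))
      ((c * Z.of_nat j + d * Z.of_nat l) mod Z.of_nat (S K))) K) K =
  sum_f_R0 (fun j => sum_f_R0 (fun l => F (Z.of_nat j) (Z.of_nat l)) K) K.
Proof.
  intros Hdet.
  set (M := Z.of_nat (S K)).
  assert (HM : (0 < M)%Z) by (unfold M; lia).
  assert (Hmod : forall u, (0 <= u mod M < M)%Z) by (intros; apply Z.mod_pos_bound; exact HM).
  set (h := fun j l : nat => (Z.to_nat ((a * Z.of_nat j + b * Z.of_nat l) mod M),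
                              Z.to_nat ((c * Z.of_nat j + d * Z.of_nat l) mod M))).
  rewrite <- (DoubleSumReindex.sum_f_R0_2_reindex K (fun j l => F (Z.of_nat j) (Z.of_nat l)) h).
  - apply sum_eq. intros j _. apply sum_eq. intros l _.
    unfold h; simpl. rewrite !Z2Nat.id by apply Hmod. reflexivity.
  - intros j l _ _. unfold h; simpl.
    split; apply Nat.lt_succ_r, Nat2Z.inj_lt; rewrite Z2Nat.id by apply Hmod; apply Hmod.
  - intros j1 l1 j2 l2 Hj1 Hl1 Hj2 Hl2 E. unfold h in E. injection E as E1 E2.
    apply Z2Nat.inj in E1, E2; try apply Hmod.
    destruct (lin_mod_inj M a b c d (Z.of_nat j1) (Z.of_nat l1) (Z.of_nat j2) (Z.of_nat l2)
                HM Hdet ltac:(lia) ltac:(lia) ltac:(lia) ltac:(lia) E1 E2).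
    split; lia.
Qed.

Definition rsum2 (G : R -> R -> R) (K : nat) : R :=
  / (INR (S K) * INR (S K)) *
  sum_f_R0 (fun j => sum_f_R0 (fun l => G (grid K j) (grid K l)) K) K.

(* The grid points [grid K j] are the (K+1)-torsion points of the circle, which a
   unimodular integer matrix permutes. *)
Lemma rsum2_linear_change (G : R -> R -> R) K (a b c d : Z) :
  (forall x y, G (x + 2 * PI) y = G x y) -> (forall x y, G x (y + 2 * PI) = G x y) ->
  (a * d - b * c = 1 \/ a * d - b * c = -1)%Z ->
  rsum2 (fun x y => G (IZR a * x + IZR b * y) (IZR c * x + IZR d * y)) K = rsum2 G K.
Proof.
  intros HGx HGy Hdet. unfold rsum2. f_equal.
  set (M := Z.of_nat (S K)).
  assert (HMpos : 0 < INR (S K)) by (apply lt_0_INR; lia).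
  set (pt := fun u : Z => 2 * PI * IZR u / INR (S K)).
  assert (Hgrid : grid K = fun j => pt (Z.of_nat j)).
  { apply functional_extensionality. intros j.
    unfold grid, pt. rewrite <- INR_IZR_INZ. reflexivity. }
  assert (Hpt_lin : forall (x y : Z) j l, IZR x * pt j + IZR y * pt l = pt (x * j + y * l)%Z).
  { intros x y j l. unfold pt. rewrite plus_IZR, !mult_IZR. field. lra. }
  assert (Hpt_mod : forall u, pt u = pt (u mod M) + 2 * IZR (u / M) * PI).
  { intros u. unfold pt. rewrite (Z.div_mod u M) at 1 by lia.
    rewrite plus_IZR, mult_IZR. unfold M. rewrite <- INR_IZR_INZ. field. lra. }
  rewrite Hgrid, <- (sum_f_R0_2_lin_mod K (fun u v => G (pt u) (pt v)) a b c d Hdet).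
  apply sum_eq. intros j _. apply sum_eq. intros l _.
  rewrite !Hpt_lin, (Hpt_mod (a * _ + _)%Z), (Hpt_mod (c * _ + _)%Z).
  apply periodic2_Z; assumption.
Qed.

Definition integrand (Phi : R * R -> R -> R) (f : CT2fun) (m n : Z) : R -> R -> R :=
  fun x y => Phi (f x y) (IZR m * x + IZR n * y).

Definition rot_re (w : R * R) (u : R) : R := fst w * cos u + snd w * sin u.
Definition rot_im (w : R * R) (u : R) : R := snd w * cos u - fst w * sin u.

Lemma rsum_re_rsum2 f m n K : rsum_re f m n K = rsum2 (integrand rot_re f m n) K.
Proof. reflexivity. Qed.

Lemma rsum_im_rsum2 f m n K : rsum_im f m n K = rsum2 (integrand rot_im f m n) K.
Proof. reflexivity. Qed.

Lemma rot_re_period w u (z : Z) : rot_re w (u + 2 * IZR z * PI) = rot_re w u.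
Proof. unfold rot_re. rewrite cos_Z_period, sin_Z_period. reflexivity. Qed.

Lemma rot_im_period w u (z : Z) : rot_im w (u + 2 * IZR z * PI) = rot_im w u.
Proof. unfold rot_im. rewrite cos_Z_period, sin_Z_period. reflexivity. Qed.

Lemma rsum2_integrand_piA Phi f A m n K :
  (forall w u (z : Z), Phi w (u + 2 * IZR z * PI) = Phi w u) -> periodic2 f -> inGL2Z A ->
  rsum2 (integrand Phi (piA A f) (e11 A * m + e21 A * n) (e12 A * m + e22 A * n)) K =
  rsum2 (integrand Phi f m n) K.
Proof.
  intros HPhi Hf HA. destruct A as [a b c d]; unfold inGL2Z, detM in HA; simpl in *.
  rewrite <- (rsum2_linear_change (integrand Phi f m n) K a b c d); [| | |exact HA].
  - f_equal. apply functional_extensionality; intros x.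
    apply functional_extensionality; intros y.
    unfold integrand, piA; simpl. f_equal. rewrite !plus_IZR, !mult_IZR. ring.
  - intros x y. unfold integrand. rewrite (proj1 (Hf x y)).
    replace (IZR m * (x + 2 * PI) + IZR n * y)
      with (IZR m * x + IZR n * y + 2 * IZR m * PI) by ring.
    apply HPhi.
  - intros x y. unfold integrand. rewrite (proj2 (Hf x y)).
    replace (IZR m * x + IZR n * (y + 2 * PI))
      with (IZR m * x + IZR n * y + 2 * IZR n * PI) by ring.
    apply HPhi.
Qed.


Lemma Rabs_lin_lt (a b x y S eps : R) : 0 < eps -> Rabs a + Rabs b < S ->
  Rabs x < eps / S -> Rabs y < eps / S -> Rabs (a * x + b * y) < eps.
Proof.
  intros Heps HS Hx Hy.
  pose proof (Rabs_pos a). pose proof (Rabs_pos b).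
  assert (Hq : 0 < eps / S) by (apply Rdiv_lt_0_compat; lra).
  apply Rle_lt_trans with ((Rabs a + Rabs b) * (eps / S)).
  - eapply Rle_trans; [apply Rabs_triang|]. rewrite !Rabs_mult. nra.
  - replace eps with (S * (eps / S)) at 2 by (field; lra).
    apply Rmult_lt_compat_r; assumption.
Qed.

Lemma piA_CT2 A f : in_CT2 f -> in_CT2 (piA A f).
Proof.
  destruct A as [a b c d]. intros [Hcont Hper]. unfold piA; simpl. split.
  - intros s t eps Heps.
    destruct (Hcont (IZR a * s + IZR b * t) (IZR c * s + IZR d * t) eps Heps) as (dl & Hdl & H).
    set (S := Rabs (IZR a) + Rabs (IZR b) + Rabs (IZR c) + Rabs (IZR d) + 1).
    pose proof (Rabs_pos (IZR a)); pose proof (Rabs_pos (IZR b)).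
    pose proof (Rabs_pos (IZR c)); pose proof (Rabs_pos (IZR d)).
    exists (dl / S). split; [apply Rdiv_lt_0_compat; unfold S; lra|].
    intros s' t' Hs Ht. apply H.
    + replace (IZR a * s' + IZR b * t' - (IZR a * s + IZR b * t))
        with (IZR a * (s' - s) + IZR b * (t' - t)) by ring.
      apply Rabs_lin_lt with S; [exact Hdl | unfold S; lra | exact Hs | exact Ht].
    + replace (IZR c * s' + IZR d * t' - (IZR c * s + IZR d * t))
        with (IZR c * (s' - s) + IZR d * (t' - t)) by ring.
      apply Rabs_lin_lt with S; [exact Hdl | unfold S; lra | exact Hs | exact Ht].
  - pose proof (periodic2_Z f (fun x y => proj1 (Hper x y)) (fun x y => proj2 (Hper x y))) as HZ.
    intros s t. split.
    + rewrite <- (HZ a c (IZR a * s + IZR b * t)). f_equal; ring.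
    + rewrite <- (HZ b d (IZR a * s + IZR b * t)). f_equal; ring.
Qed.

Lemma piA_mulM A B g s t : piA A (piA B g) s t = piA (mulM B A) g s t.
Proof.
  destruct A as [a b c d], B as [a' b' c' d']. unfold piA, mulM; simpl.
  rewrite !plus_IZR, !mult_IZR. f_equal; ring.
Qed.

Lemma piA_idM g s t : piA idM g s t = g s t.
Proof. unfold piA, idM; simpl. f_equal; ring. Qed.

(* The Fourier coefficient of [piA A f] at (m, n) is that of [f] at [A^-T (m, n)],
   and [m + al n] is the multiple [eigval al A] of the corresponding value there. *)
Lemma piA_in_A al A f : stab_ray al A -> in_A al f -> in_A al (piA A f).
Proof.
  intros HS [Hf Hcoef]. split; [apply piA_CT2; exact Hf|].
  intros m n Hmn.
  destruct HS as (HA & EA & PA). pose proof HA as HA'.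
  destruct A as [a b c d]. unfold has_eigvec, eigval, inGL2Z, detM in *; simpl in *.
  set (det := (a * d - b * c)%Z) in HA'.
  set (m' := (det * (d * m - c * n))%Z). set (n' := (det * (a * n - b * m))%Z).
  assert (Hdet2 : (det * det = 1)%Z) by (destruct HA' as [-> | ->]; reflexivity).
  assert (Hm : m = (a * m' + c * n')%Z).
  { rewrite <- (Z.mul_1_l m) at 1. rewrite <- Hdet2. unfold m', n', det. ring. }
  assert (Hn : n = (b * m' + d * n')%Z).
  { rewrite <- (Z.mul_1_l n) at 1. rewrite <- Hdet2. unfold m', n', det. ring. }
  assert (Hneg : IZR m' + al * IZR n' < 0).
  { assert (E : IZR m + al * IZR n = (IZR a + al * IZR b) * (IZR m' + al * IZR n')).
    { rewrite Hm, Hn, !plus_IZR, !mult_IZR.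
      replace (IZR c) with (al * (IZR a + al * IZR b) - al * IZR d) by lra. ring. }
    rewrite E in Hmn. nra. }
  destruct (Hcoef m' n' Hneg) as [Hre Him].
  rewrite Hm, Hn. split.
  - replace (rsum_re _ _ _) with (rsum_re f m' n'); [exact Hre|].
    apply functional_extensionality. intros K. rewrite !rsum_re_rsum2.
    symmetry. apply (rsum2_integrand_piA _ _ (mkM2 a b c d));
      [apply rot_re_period | apply Hf | exact HA].
  - replace (rsum_im _ _ _) with (rsum_im f m' n'); [exact Him|].
    apply functional_extensionality. intros K. rewrite !rsum_im_rsum2.
    symmetry. apply (rsum2_integrand_piA _ _ (mkM2 a b c d));
      [apply rot_im_period | apply Hf | exact HA].
Qed.

Lemma isom_aut_A_of_stab_ray al A : stab_ray al A -> isom_aut_A al A.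
Proof.
  intros HS. pose proof (proj1 HS) as HA. split; [|split].
  - intros f Hf. apply piA_in_A; assumption.
  - intros g Hg. exists (piA (invM A) g). split.
    + apply piA_in_A; [apply stab_ray_invM; exact HS | exact Hg].
    + intros s t. rewrite piA_mulM, mulM_invM_l by exact HA. apply piA_idM.
  - intros f Hf. split; intros M HM s t.
    + rewrite <- piA_idM, <- (mulM_invM_r A HA), <- piA_mulM. apply HM.
    + apply HM.
Qed.

Lemma Un_cv_eventually_const (u : nat -> R) l N :
  (forall n, (N <= n)%nat -> u n = l) -> Un_cv u l.
Proof.
  intros Hu eps Heps. exists N. intros n Hn.
  unfold R_dist. rewrite Hu, Rminus_diag, Rabs_R0 by exact Hn. exact Heps.
Qed.

Lemma sum_f_R0_telescope (T : nat -> R) K :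
  sum_f_R0 (fun j => T (S j) - T j) K = T (S K) - T O.
Proof. induction K as [|K IH]; simpl; [|rewrite IH]; ring. Qed.

(* Multiplying by [2 sin (theta / 2)], with [theta = 2 pi a / (K + 1)], makes the
   sum telescope; the factor is nonzero exactly when [K + 1] does not divide [a]. *)
Lemma sum_cos_grid K (a : Z) phi : ~ (Z.of_nat (S K) | a)%Z ->
  sum_f_R0 (fun j => cos (IZR a * grid K j + phi)) K = 0.
Proof.
  intros Hndiv.
  assert (HM : 0 < INR (S K)) by (apply lt_0_INR; lia).
  set (th := 2 * PI * IZR a / INR (S K)).
  assert (Hsin : sin (th / 2) <> 0).
  { intros H. apply sin_eq_0_0 in H as [z Hz]. apply Hndiv. exists z.
    apply eq_IZR. rewrite mult_IZR, <- INR_IZR_INZ.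
    apply Rmult_eq_reg_l with PI; [|apply PI_neq0].
    replace (PI * IZR a) with (th / 2 * INR (S K)) by (unfold th; field; lra).
    rewrite Hz. ring. }
  set (T := fun j => sin (INR j * th - th / 2 + phi)).
  assert (Htel : 2 * sin (th / 2) * sum_f_R0 (fun j => cos (IZR a * grid K j + phi)) K
                 = T (S K) - T O).
  { rewrite <- sum_f_R0_telescope, scal_sum. apply sum_eq. intros j _. unfold T.
    rewrite form4, S_INR.
    replace (IZR a * grid K j) with (INR j * th) by (unfold grid, th; field; lra).
    replace (((INR j + 1) * th - th / 2 + phi + (INR j * th - th / 2 + phi)) / 2)
      with (INR j * th + phi) by field.
    replace (((INR j + 1) * th - th / 2 + phi - (INR j * th - th / 2 + phi)) / 2)
      with (th / 2) by field.
    ring. }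
  assert (Hper : T (S K) = T O).
  { unfold T. rewrite <- (sin_Z_period a (INR 0 * th - th / 2 + phi)). f_equal.
    change (INR 0) with 0. unfold th. field. lra. }
  rewrite Hper, Rminus_diag in Htel.
  apply Rmult_integral in Htel as [H|H]; [exfalso; apply Hsin; lra | exact H].
Qed.

Lemma sum2_cos_grid K (a b : Z) phi : (a <> 0 \/ b <> 0)%Z ->
  (Z.abs a <= Z.of_nat K)%Z -> (Z.abs b <= Z.of_nat K)%Z ->
  sum_f_R0 (fun j => sum_f_R0 (fun l => cos (IZR a * grid K j + IZR b * grid K l + phi)) K) K = 0.
Proof.
  intros Hab Ha Hb.
  assert (Hndiv : forall x : Z, x <> 0%Z -> (Z.abs x <= Z.of_nat K)%Z -> ~ (Z.of_nat (S K) | x)%Z).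
  { intros x Hx HxK Hdiv. apply Hx, divide_abs_lt with (Z.of_nat (S K)); [exact Hdiv | lia]. }
  destruct (Z.eq_dec b 0) as [->|Hb0].
  - destruct Hab as [Ha0|]; [|lia].
    transitivity (INR (S K) * sum_f_R0 (fun j => cos (IZR a * grid K j + phi)) K).
    + rewrite scal_sum. apply sum_eq. intros j _. rewrite <- sum_cte.
      apply sum_eq. intros l _. f_equal. simpl. ring.
    + rewrite (sum_cos_grid K a phi (Hndiv a Ha0 Ha)). ring.
  - apply sum_eq_R0. intros j _.
    rewrite <- (sum_cos_grid K b (IZR a * grid K j + phi) (Hndiv b Hb0 Hb)).
    apply sum_eq. intros l _. f_equal. ring.
Qed.

Definition chi (m n : Z) : CT2fun :=
  fun s t => (cos (IZR m * s + IZR n * t), sin (IZR m * s + IZR n * t)).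

Lemma piA_chi A m n : piA A (chi m n) = chi (e11 A * m + e21 A * n) (e12 A * m + e22 A * n).
Proof.
  apply functional_extensionality; intros s. apply functional_extensionality; intros t.
  destruct A as [a b c d]. unfold piA, chi; simpl.
  replace (IZR m * (IZR a * s + IZR b * t) + IZR n * (IZR c * s + IZR d * t))
    with (IZR (a * m + c * n) * s + IZR (b * m + d * n) * t)
    by (rewrite !plus_IZR, !mult_IZR; ring).
  reflexivity.
Qed.

Lemma chi_CT2 m n : in_CT2 (chi m n).
Proof.
  split.
  - intros s t eps Heps. unfold chi; simpl.
    set (S := Rabs (IZR m) + Rabs (IZR n) + 1).
    pose proof (Rabs_pos (IZR m)). pose proof (Rabs_pos (IZR n)).
    exists (eps / S). split; [apply Rdiv_lt_0_compat; unfold S; lra|].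
    intros s' t' Hs Ht.
    assert (Hphase : Rabs (IZR m * s' + IZR n * t' - (IZR m * s + IZR n * t)) < eps).
    { replace (IZR m * s' + IZR n * t' - (IZR m * s + IZR n * t))
        with (IZR m * (s' - s) + IZR n * (t' - t)) by ring.
      apply Rabs_lin_lt with S; [exact Heps | unfold S; lra | exact Hs | exact Ht]. }
    split; eapply Rle_lt_trans;
      [apply cos_lipschitz | exact Hphase | apply sin_lipschitz | exact Hphase].
  - intros s t. unfold chi.
    replace (IZR m * (s + 2 * PI) + IZR n * t)
      with (IZR m * s + IZR n * t + 2 * IZR m * PI) by ring.
    replace (IZR m * s + IZR n * (t + 2 * PI))
      with (IZR m * s + IZR n * t + 2 * IZR n * PI) by ring.
    rewrite !cos_Z_period, !sin_Z_period. split; reflexivity.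
Qed.

(* The imaginary part is written as a shifted cosine so that [sum2_cos_grid]
   covers both parts. *)
Lemma rsum_chi m n m' n' K :
  rsum_re (chi m n) m' n' K = / (INR (S K) * INR (S K)) *
    sum_f_R0 (fun j => sum_f_R0 (fun l =>
      cos (IZR (m - m') * grid K j + IZR (n - n') * grid K l + 0)) K) K /\
  rsum_im (chi m n) m' n' K = / (INR (S K) * INR (S K)) *
    sum_f_R0 (fun j => sum_f_R0 (fun l =>
      cos (IZR (m - m') * grid K j + IZR (n - n') * grid K l + - (PI / 2))) K) K.
Proof.
  split; unfold rsum_re, rsum_im, chi; f_equal;
    apply sum_eq; intros j _; apply sum_eq; intros l _; simpl.
  - rewrite <- cos_minus. f_equal. rewrite !minus_IZR. ring.
  - rewrite <- sin_minus, <- cos_shift, <- cos_neg. f_equal. rewrite !minus_IZR. ring.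
Qed.

Lemma chi_in_A al m n : 0 <= IZR m + al * IZR n -> in_A al (chi m n).
Proof.
  intros Hmn. split; [apply chi_CT2|]. intros m' n' Hmn'.
  assert (Hne : (m - m' <> 0 \/ n - n' <> 0)%Z).
  { destruct (Z.eq_dec m m'), (Z.eq_dec n n'); try (left; lia); try (right; lia).
    subst. lra. }
  set (N0 := Z.to_nat (Z.abs (m - m') + Z.abs (n - n'))).
  assert (Hvanish : forall K, (N0 <= K)%nat ->
            rsum_re (chi m n) m' n' K = 0 /\ rsum_im (chi m n) m' n' K = 0).
  { intros K HK. destruct (rsum_chi m n m' n' K) as [-> ->].
    rewrite !sum2_cos_grid by (exact Hne || (unfold N0 in HK; lia)). split; ring. }
  split; apply (Un_cv_eventually_const _ _ N0); intros K HK; apply (Hvanish K HK).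
Qed.

Lemma chi_notin_A al m n : IZR m + al * IZR n < 0 -> ~ in_A al (chi m n).
Proof.
  intros Hmn [_ Hcoef]. destruct (Hcoef m n Hmn) as [Hre _].
  assert (Hone : Un_cv (rsum_re (chi m n) m n) 1).
  { apply (Un_cv_eventually_const _ _ 0). intros K _.
    rewrite (proj1 (rsum_chi m n m n K)), !Z.sub_diag.
    assert (HM : 0 < INR (S K)) by (apply lt_0_INR; lia).
    rewrite (sum_eq _ (fun _ => sum_f_R0 (fun _ => 1) K)), sum_cte, sum_cte; [field; lra|].
    intros j _. apply sum_eq. intros l _. simpl IZR. rewrite <- cos_0. f_equal. ring. }
  pose proof (UL_sequence _ _ _ Hre Hone). simpl in H. lra.
Qed.

(* If [D = v - al u] were nonzero, pick [n] with [D n < - |u|] and then [m] with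
   [0 <= m + al n <= 1]; the point (m, n) violates the hypothesis. *)
Lemma halfplane_nonneg al (u v : R) :
  (forall m n : Z, 0 <= IZR m + al * IZR n -> 0 <= u * IZR m + v * IZR n) ->
  v = al * u /\ 0 <= u.
Proof.
  intros H.
  assert (Hu : 0 <= u) by (specialize (H 1%Z 0%Z); simpl in H; lra).
  split; [|exact Hu].
  remember (v - al * u) as D eqn:HDdef.
  destruct (Req_dec D 0) as [HD|HD]; [lra|]. exfalso.
  assert (Hn : exists n : Z, D * IZR n < - Rabs u).
  { destruct (archimed (Rabs u / Rabs D)) as [Hup _].
    assert (HDpos : 0 < Rabs D) by (apply Rabs_pos_lt; exact HD).
    assert (Hbig : Rabs u < Rabs D * IZR (up (Rabs u / Rabs D))).
    { apply Rmult_lt_reg_l with (/ Rabs D); [apply Rinv_0_lt_compat; exact HDpos|].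
      rewrite <- Rmult_assoc, Rinv_l by lra. lra. }
    set (k := up (Rabs u / Rabs D)) in Hbig.
    destruct (Rcase_abs D) as [Dneg|Dpos].
    - exists k. rewrite (Rabs_left D) in Hbig by exact Dneg. nra.
    - exists (- k)%Z. rewrite opp_IZR. rewrite (Rabs_right D) in Hbig by exact Dpos. nra. }
  destruct Hn as [n Hn].
  destruct (archimed (- (al * IZR n))) as [Hm1 Hm2].
  set (m := up (- (al * IZR n))) in *.
  specialize (H m n ltac:(lra)).
  assert (u * (IZR m + al * IZR n) <= Rabs u).
  { rewrite Rabs_right by lra. assert (IZR m + al * IZR n <= 1) by lra. nra. }
  replace (u * IZR m + v * IZR n) with (u * (IZR m + al * IZR n) + D * IZR n) in H
    by (rewrite HDdef; ring).
  lra.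
Qed.

(* Testing [piA A] on the characters shows that the dual action of [A] preserves
   the half-plane [m + al n >= 0]. *)
Lemma stab_ray_of_isom_aut_A al A : irrational al -> inGL2Z A -> isom_aut_A al A -> stab_ray al A.
Proof.
  intros Hirr HA [Hinto _].
  assert (Hcone : forall m n : Z, 0 <= IZR m + al * IZR n ->
            0 <= eigval al A * IZR m + (IZR (e21 A) + al * IZR (e22 A)) * IZR n).
  { intros m n Hmn. pose proof (Hinto _ (chi_in_A al m n Hmn)) as Hchi.
    rewrite piA_chi in Hchi.
    destruct (Rlt_or_le (IZR (e11 A * m + e21 A * n) + al * IZR (e12 A * m + e22 A * n)) 0)
      as [Hlt|Hle].
    - exfalso. exact (chi_notin_A al _ _ Hlt Hchi).
    - unfold eigval. rewrite !plus_IZR, !mult_IZR in Hle. lra. }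
  destruct (halfplane_nonneg al _ _ Hcone) as [Hvec [Hpos|Hzero]].
  - split; [exact HA | split; [exact Hvec | exact Hpos]].
  - exfalso. destruct A as [a b c d]. unfold eigval in Hzero; simpl in Hzero.
    destruct (irrational_lin_indep al a b Hirr) as [-> ->]; [lra|].
    unfold inGL2Z, detM in HA; simpl in HA. lia.
Qed.

Lemma isom_aut_A_iff_stab_ray al A : irrational al -> inGL2Z A ->
  (isom_aut_A al A <-> stab_ray al A).
Proof.
  intros Hirr HA. split; [apply stab_ray_of_isom_aut_A; assumption | apply isom_aut_A_of_stab_ray].
Qed.

(** * The quadratic irrational alpha_of r p q s k *)

Lemma gcd_odd_double (r s : Z) : Z.odd s = true -> Z.gcd r s = 1%Z -> Z.gcd s (2 * r) = 1%Z.
Proof.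
  intros Hodd Hrs. apply Zgcd_1_rel_prime, rel_prime_mult.
  - apply Zgcd_1_rel_prime. rewrite (Z.div2_odd s), Hodd, Z.gcd_comm.
    replace (2 * Z.div2 s + Z.b2z true)%Z with (1 + Z.div2 s * 2)%Z by (cbn [Z.b2z]; ring).
    apply Z.gcd_add_mult_diag_r.
  - apply rel_prime_sym, Zgcd_1_rel_prime. exact Hrs.
Qed.

Section AlphaData.

Variables (r p q s k : Z).
Hypotheses (hp : (0 < p)%Z) (hq : (0 < q)%Z) (hs : (0 < s)%Z) (hk : k = 1%Z \/ k = (-1)%Z).

Let d := d1_of r p q s.
Let e := (q * s / d)%Z.
Let f := ((p * s * s - q * r * r) / d)%Z.

Lemma d1_pos : (0 < d)%Z.
Proof.
  assert (Hnz : d <> 0%Z) by (intros H; apply Z.gcd_eq_0_r in H; nia).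
  pose proof (Z.gcd_nonneg (p * s * s - q * r * r) (q * s)). unfold d, d1_of in *. lia.
Qed.

Lemma d1_mul_e : (d * e = q * s)%Z.
Proof. symmetry. apply Zdivide_Zdiv_eq; [exact d1_pos | apply Z.gcd_divide_r]. Qed.

Lemma d1_mul_f : (d * f = p * s * s - q * r * r)%Z.
Proof. symmetry. apply Zdivide_Zdiv_eq; [exact d1_pos | apply Z.gcd_divide_l]. Qed.

Lemma e_pos : (0 < e)%Z.
Proof. pose proof d1_pos. pose proof d1_mul_e. nia. Qed.

Lemma gcd_e_f : Z.gcd e f = 1%Z.
Proof.
  pose proof d1_pos as Hd.
  assert (G : d = Z.gcd (d * f) (d * e)) by (rewrite d1_mul_e, d1_mul_f; reflexivity).
  rewrite Z.gcd_mul_mono_l, Z.abs_eq, Z.gcd_comm in G by lia.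
  apply Z.mul_reg_l with d; lia.
Qed.

Lemma N_of_pellN : N_of r p q s = pellN r s e f.
Proof.
  pose proof d1_pos. pose proof d1_mul_e as He. pose proof d1_mul_f as Hf.
  unfold N_of, pellN. fold d.
  replace (p * q * s ^ 4)%Z with ((e * e * r * r + e * s * f) * (d * d))%Z; [apply Z.div_mul; nia|].
  apply Z.mul_reg_l with q; [lia|].
  replace (q * ((e * e * r * r + e * s * f) * (d * d)))%Z
    with ((d * e) * (d * e) * r * r * q + (d * e) * s * (d * f) * q)%Z by ring.
  rewrite He, Hf. ring.
Qed.

Lemma genM_pellM kk x y : genM r p q s kk x y = pellM r s e f x (kk * y).
Proof.
  pose proof d1_pos. pose proof d1_mul_e as He. pose proof d1_mul_f as Hf.
  unfold genM, pellM. fold d. fold f.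
  assert (E1 : (q * r * s = e * r * d)%Z)
    by (transitivity (q * s * r)%Z; [ring | rewrite <- He; ring]).
  assert (E2 : (q * s * s = e * s * d)%Z) by (rewrite <- He; ring).
  rewrite E1, E2.
  rewrite !Z.div_mul by lia. f_equal; ring.
Qed.

Let sg := sqrt (IZR p / IZR q).

Lemma alpha_shift : IZR e * (IZR s * alpha_of r p q s k - IZR r) = IZR k * (IZR e * IZR s * sg).
Proof.
  unfold alpha_of. fold sg. field. apply not_0_IZR. lia.
Qed.

Lemma alpha_scale_pos : 0 < IZR e * IZR s * sg.
Proof.
  pose proof e_pos. apply Rmult_lt_0_compat; [apply Rmult_lt_0_compat; apply IZR_lt; lia|].
  apply sqrt_lt_R0, Rdiv_lt_0_compat; apply IZR_lt; lia.
Qed.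

Lemma alpha_quad :
  IZR e * IZR s * alpha_of r p q s k * alpha_of r p q s k
  - 2 * IZR e * IZR r * alpha_of r p q s k - IZR f = 0.
Proof.
  set (al := alpha_of r p q s k).
  assert (Hsg : sg * sg * IZR q = IZR p).
  { unfold sg. rewrite sqrt_sqrt; [field | apply Rlt_le, Rdiv_lt_0_compat];
      first [apply not_0_IZR; lia | apply IZR_lt; lia]. }
  assert (Hk2 : IZR k * IZR k = 1) by (destruct hk as [-> | ->]; simpl; lra).
  assert (He : IZR d * IZR e = IZR q * IZR s) by (rewrite <- !mult_IZR, d1_mul_e; reflexivity).
  assert (Hf : IZR d * IZR f = IZR p * IZR s * IZR s - IZR q * IZR r * IZR r)
    by (rewrite <- !mult_IZR, <- minus_IZR, d1_mul_f; reflexivity).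
  assert (Hal : IZR s * al - IZR r = IZR k * IZR s * sg).
  { unfold al, alpha_of. fold sg. field. apply not_0_IZR. lia. }
  apply Rmult_eq_reg_l with (IZR d); [|apply not_0_IZR; pose proof d1_pos; lia].
  rewrite Rmult_0_r.
  transitivity (IZR q * ((IZR s * al - IZR r) * (IZR s * al - IZR r)) - IZR p * IZR s * IZR s).
  - replace (IZR d * (IZR e * IZR s * al * al - 2 * IZR e * IZR r * al - IZR f))
      with ((IZR d * IZR e) * (IZR s * al * al - 2 * IZR r * al) - IZR d * IZR f) by ring.
    rewrite He, Hf. ring.
  - rewrite Hal, <- Hsg.
    replace (IZR q * (IZR k * IZR s * sg * (IZR k * IZR s * sg)))
      with ((IZR k * IZR k) * (sg * sg * IZR q) * IZR s * IZR s) by ring.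
    rewrite Hk2. ring.
Qed.

End AlphaData.

Theorem mainTheorem16 (r p q s k : Z)
  (hp : (0 < p)%Z) (hq : (0 < q)%Z) (hs : (0 < s)%Z)
  (hk : k = 1%Z \/ k = (-1)%Z)
  (hsodd : Z.odd s = true)
  (hrs : Z.gcd r s = 1%Z) (hpq : Z.gcd p q = 1%Z)
  (hpos : 0 < alpha_of r p q s k)
  (hirr : irrational (alpha_of r p q s k)) :
  (~ pell_solvable (N_of r p q s) (-1) ->
   forall x1 y1 : Z, fundamental_solution (N_of r p q s) 1 x1 y1 ->
   forall A : M2, inGL2Z A ->
     (isom_aut_A (alpha_of r p q s k) A <->
      exists n : Z, A = powM (genM r p q s 1 x1 y1) n))
  /\
  (pell_solvable (N_of r p q s) (-1) ->
   forall x1' y1' : Z, fundamental_solution (N_of r p q s) (-1) x1' y1' ->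
   forall A : M2, inGL2Z A ->
     (isom_aut_A (alpha_of r p q s k) A <->
      exists n : Z, A = powM (genM r p q s k x1' y1') n)).
Proof.
  pose proof (e_pos r p q s hq hs) as He.
  pose proof (gcd_e_f r p q s hq hs) as Hef.
  pose proof (gcd_odd_double r s hsodd hrs) as Hs2r.
  pose proof (alpha_quad r p q s k hp hq hs hk) as Hquad.
  pose proof (alpha_shift r p q s k hs) as Hshift.
  pose proof (alpha_scale_pos r p q s hp hq hs) as Ht.
  set (t := IZR (q * s / d1_of r p q s) * IZR s * sqrt (IZR p / IZR q)) in Ht, Hshift.
  rewrite (N_of_pellN r p q s hq hs). split.
  - intros Hnsol x1 y1 Hfund A HA.
    rewrite isom_aut_A_iff_stab_ray, genM_pellM, Z.mul_1_l by assumption.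
    eapply stab_ray_iff_powM_pell_plus with (k := k) (t := t); eassumption.
  - intros _ x1 y1 Hfund A HA.
    rewrite isom_aut_A_iff_stab_ray, genM_pellM by assumption.
    eapply stab_ray_iff_powM_pell_minus with (k := k) (t := t); eassumption.
Qed.
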